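(* For $n\ge 1$, \begin{align*} (\mathfrak C_0+\mathfrak C_0+\mathfrak C_0+\mathfrak C_0)^n&=\frac{(2n)!}{6}\sum_{l=0}^{n}\frac{(-1)^{n-l}(2n-2l-3)!!\,(2l-1)(2l-2)(2l-3)}{2^{n-l}(n-l)!\,(2l)!}\mathfrak C_{2l}\\ &\quad+\frac{(2n)!}{6}\sum_{l=1}^{n}\frac{(-1)^{n-l}(2n-2l-3)!!\,(2l)(2l-1)(2l-3)^3}{2^{n-l}(n-l)!\,(2l)!}\mathfrak C_{2l-2}. \end{align*}
   Context: The numbers $\mathfrak C_{2n}$ (Cauchy numbers with level $2$) are defined by $\frac{t}{{\rm arcsinh}\,t}=\sum_{n=0}^\infty\mathfrak C_{2n}\frac{t^{2n}}{(2n)!}$. Convolution notation: $(\mathfrak C_{2j_1}+\cdots+\mathfrak C_{2j_k})^n:=\sum_{i_1+\cdots+i_k=n,\ i_1,\dots,i_k\ge0}\frac{(2n)!}{(2i_1)!\cdots(2i_k)!}\mathfrak C_{2i_1+2j_1}\cdots\mathfrak C_{2i_k+2j_k}$. Double factorials: $(2i-1)!!=(2i-1)(2i-3)\cdots1$ for $i\ge1$, $(-1)!!=1$, and $(-(2i+1))!!=\frac{(-1)^i}{(2i-1)!!}$ for $i\ge1$. *)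

From mathcomp Require Import all_boot all_order all_algebra.
Set Implicit Arguments. Unset Strict Implicit. Unset Printing Implicit Defensive.
Import Order.TTheory GRing.Theory Num.Theory.
Local Open Scope ring_scope.

(* Maclaurin coefficients of arcsinh(t)/t :
   arcsinh t = \sum_k (-1)^k (2k)! / (4^k (k!)^2 (2k+1)) t^(2k+1),
   so  arcsinh(t)/t = \sum_k asinh_coef k * t^(2k). *)
Definition asinh_coef (k : nat) : rat :=
  (-1) ^+ k * (k.*2)`!%:R / (4 ^ k * (k`! ^ 2) * k.*2.+1)%:R.

(* Coefficients b_n of the formal reciprocal series
   t/arcsinh t = 1 / (\sum_k asinh_coef k t^(2k)) = \sum_n b_n t^(2n):
   b_0 = 1, b_n = - \sum_(1 <= k <= n) asinh_coef k * b_(n-k).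
   [recip_seq n] is the list [b_0; ...; b_n]. *)
Fixpoint recip_seq (n : nat) : seq rat :=
  match n with
  | 0 => [:: 1]
  | m.+1 => let s := recip_seq m in
            rcons s (- \sum_(1 <= k < m.+2) asinh_coef k * nth 0 s (m.+1 - k))
  end.

(* Cauchy numbers with level 2:  t/arcsinh t = \sum_n C2 n * t^(2n)/(2n)!,
   i.e. [C2 n] is the paper's \mathfrak C_{2n}. *)
Definition C2 (n : nat) : rat := (n.*2)`!%:R * nth 0 (recip_seq n) n.

(* Convolution (C_{2 j_1} + ... + C_{2 j_k})^n :=
   \sum_{i_1+...+i_k = n} (2n)!/((2i_1)!...(2i_k)!) C_{2i_1+2j_1} ... C_{2i_k+2j_k} *)
Definition convC (k : nat) (j : 'I_k -> nat) (n : nat) : rat :=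
  \sum_(i : {ffun 'I_k -> 'I_n.+1} | (\sum_(r < k) (i r : nat))%N == n)
     ((n.*2)`!%:R / (\prod_(r < k) ((i r : nat).*2)`!)%:R *
      \prod_(r < k) C2 (i r + j r)).

(* Odd double factorial: [oddfact m] = (2m-1)!! for m : int, with
   (2i-1)!! = (2i-1)(2i-3)...1 (i >= 1), (-1)!! = 1, and
   (-(2i+1))!! = (-1)^i / (2i-1)!! for i >= 1. *)
Definition oddfact_nat (i : nat) : nat := \prod_(1 <= r < i.+1) r.*2.-1.
Definition oddfact (m : int) : rat :=
  match m with
  | Posz i => (oddfact_nat i)%:R
  | Negz i => (* m = -(i+1), 2m-1 = -(2(i+1)+1) *)
      (-1) ^+ i.+1 / (oddfact_nat i.+1)%:R
  end.

From mathcomp Require Import all_boot all_order all_algebra.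
From mathcomp Require Import zify ring.
Import Order.TTheory GRing.Theory Num.Theory.
Local Open Scope ring_scope.

(* Work with power series in X = t^2, truncated modulo X^(n+1), and with the
   Euler operator θ = t d/dt, which multiplies X^i by 2i.  The series
   g = t/arcsinh t, u = arcsinh(t)/t, w = (1+X)^(-1/2) and s = -(1+X)^(1/2)
   satisfy g u = 1, θu = w - u, (1+X) θw = -X w and (1+X) θs = X s.  Since
   (1+X) θ has no nonzero solution with zero constant term, w^2 (1+X) = 1 and
   s w = -1, hence θw = w^3 - w and θg = g - g^2 w.  Using these to eliminate
   X yields s ((θ-1)(θ-2)(θ-3) + X (θ-1)^3) g = 6 g^4.  As
   (C_0+C_0+C_0+C_0)^n = (2n)! [X^n] g^4 and
   [X^m] s = (-1)^m (2m-3)!! / (2^m m!), comparing the coefficients of X^n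
   gives the formula. *)

Section TruncatedSeries.
Variables (R : numDomainType) (n : nat).

Definition Xn1 : {poly R} := 'X^(n.+1).
Local Notation Q := {poly %/ Xn1}.
Local Notation trunc := (in_qpoly Xn1).
Local Notation x := (trunc 'X).

Lemma val_trunc p : trunc p = take_poly n.+1 p :> {poly R}.
Proof. by rewrite /= mk_monic_Xn Pdiv.RingMonic.take_poly_rmodp. Qed.

Lemma coef_trunc p i : (i <= n)%N -> (trunc p)`_i = p`_i.
Proof. by rewrite val_trunc coef_take_poly ltnS => ->. Qed.

Lemma size_qpolyXn (a : Q) : (size a <= n.+1)%N.
Proof.
have size_h : size (mk_monic Xn1) = n.+2.
  by rewrite mk_monic_Xn size_polyXn.
by rewrite -ltnS -size_h size_mk_monic.
Qed.

Lemma truncK (a : Q) : trunc a = a.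
Proof.
by apply: val_inj; rewrite [LHS]val_trunc take_poly_id ?size_qpolyXn.
Qed.

Lemma qpoly_coefP (a b : Q) : (forall i, (i <= n)%N -> a`_i = b`_i) -> a = b.
Proof.
move=> eq_ab; apply/val_inj/polyP => i; have [/eq_ab //|lt_ni] := leqP i n.
by rewrite !nth_default // (leq_trans (size_qpolyXn _)).
Qed.

Lemma coefq0 i : (0 : Q)`_i = 0.
Proof. by rewrite coef0. Qed.

Lemma coefq1 i : (i <= n)%N -> (1 : Q)`_i = (i == 0%N)%:R.
Proof. by move=> le_in; rewrite -(rmorph1 trunc) coef_trunc // coef1. Qed.

Lemma coefqD (a b : Q) i : (a + b)`_i = a`_i + b`_i.
Proof. by rewrite coefD. Qed.

Lemma coefqN (a : Q) i : (- a)`_i = - a`_i.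
Proof. by rewrite coefN. Qed.

Lemma coefqMn (a : Q) k i : (a *+ k)`_i = a`_i *+ k.
Proof. by elim: k => [|k IHk]; rewrite ?mulr0n ?coefq0 // !mulrS coefqD IHk. Qed.

Lemma coefqMr (a b : Q) i : (i <= n)%N ->
  (a * b)`_i = \sum_(j < i.+1) a`_(i - j) * b`_j.
Proof.
move=> le_in; have -> : a * b = trunc ((a : {poly R}) * b).
  by rewrite rmorphM /= !truncK.
by rewrite coef_trunc // coefMr.
Qed.

Lemma coefqM0 (a b : Q) : (a * b)`_0 = a`_0 * b`_0.
Proof. by rewrite coefqMr // big_ord1. Qed.

Lemma coefqXM (a : Q) i : (i <= n)%N ->
  (x * a)`_i = if i == 0%N then 0 else a`_i.-1.
Proof.
move=> le_in; have -> : x * a = trunc ('X * a) by rewrite rmorphM /= truncK.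
by rewrite coef_trunc // coefXM.
Qed.

Definition series (f : nat -> R) : Q := trunc (\poly_(i < n.+1) f i).

Lemma coef_series f i : (i <= n)%N -> (series f)`_i = f i.
Proof. by move=> le_in; rewrite coef_trunc // coef_poly ltnS le_in. Qed.

(* The Euler operator t d/dt, written in the variable X = t^2. *)
Definition theta (p : {poly R}) : {poly R} := 'X * p^`() *+ 2.

Lemma coef_theta p i : (theta p)`_i = p`_i * (i.*2)%:R.
Proof.
rewrite coefMn coefXM; case: i => [|i] /=; first by rewrite mulr0 mul0rn.
by rewrite coef_deriv -mulrnA muln2 mulr_natr.
Qed.

Lemma thetaM p q : theta (p * q) = theta p * q + p * theta q.
Proof. rewrite /theta derivM; ring. Qed.

Definition Theta (a : Q) : Q := trunc (theta a).

Lemma coef_Theta a i : (i <= n)%N -> (Theta a)`_i = a`_i * (i.*2)%:R.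
Proof. by move=> le_in; rewrite coef_trunc // coef_theta. Qed.

Lemma Theta_trunc p : Theta (trunc p) = trunc (theta p).
Proof.
by apply: qpoly_coefP => i le_in; rewrite coef_Theta // !coef_trunc // coef_theta.
Qed.

Lemma ThetaD a b : Theta (a + b) = Theta a + Theta b.
Proof.
by apply: qpoly_coefP => i le_in; rewrite coefqD !coef_Theta // coefqD mulrDl.
Qed.

Lemma ThetaN a : Theta (- a) = - Theta a.
Proof.
by apply: qpoly_coefP => i le_in; rewrite coefqN !coef_Theta // coefqN mulNr.
Qed.

Lemma ThetaMn a k : Theta (a *+ k) = Theta a *+ k.
Proof.
by apply: qpoly_coefP => i le_in; rewrite coefqMn !coef_Theta // coefqMn mulrnAl.
Qed.

Lemma ThetaM a b : Theta (a * b) = Theta a * b + a * Theta b.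
Proof.
have -> : a * b = trunc ((a : {poly R}) * b) by rewrite rmorphM /= !truncK.
by rewrite Theta_trunc thetaM rmorphD !rmorphM /= !truncK.
Qed.

Lemma Theta1 : Theta 1 = 0.
Proof.
apply: qpoly_coefP => i le_in.
rewrite coef_Theta // coefq1 // coefq0.
by case: i {le_in} => [|i]; rewrite ?mulr0 ?mul0r.
Qed.

Lemma ThetaX : Theta x = x *+ 2.
Proof. by rewrite Theta_trunc /theta derivX mulr1 rmorphMn. Qed.

Lemma Theta_ode_eq0 (a : Q) : (1 + x) * Theta a = 0 -> a`_0 = 0 -> a = 0.
Proof.
move=> ode a0_eq0; apply: qpoly_coefP => i; rewrite coefq0.
elim: i => [//|i IHi] lt_in; have le_in := ltnW lt_in.
have /eqP := congr1 (fun b : Q => b`_i.+1) ode.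
rewrite mulrDl mul1r coefqD coefqXM // !coef_Theta //= IHi // mul0r addr0.
by rewrite coefq0 mulf_eq0 pnatr_eq0 orbF => /eqP.
Qed.

Definition Theta_sub (k : nat) (a : Q) : Q := Theta a - a *+ k.

Lemma coef_Theta_sub k a i : (i <= n)%N ->
  (Theta_sub k a)`_i = a`_i * (2 * i%:R - k%:R).
Proof.
by move=> le_in; rewrite coefqD coefqN coef_Theta // coefqMn -muln2 natrM; ring.
Qed.

Definition Lop (a : Q) : Q :=
  Theta_sub 1 (Theta_sub 2 (Theta_sub 3 a))
  + x * Theta_sub 1 (Theta_sub 1 (Theta_sub 1 a)).

Lemma coef_Lop a j : (j <= n)%N ->
  (Lop a)`_j = a`_j * ((2 * j%:R - 1) * (2 * j%:R - 2) * (2 * j%:R - 3))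
             + (if j == 0%N then 0 else a`_j.-1 * (2 * j%:R - 3) ^+ 3).
Proof.
move=> le_jn; rewrite coefqD coefqXM //.
case: j le_jn => [|j] le_jn; rewrite !coef_Theta_sub ?(ltnW le_jn) //=.
  by rewrite addr0; ring.
by rewrite -natr1; ring.
Qed.

End TruncatedSeries.

Arguments series {R} n f.
Arguments Theta {R n} a.
Arguments Theta_sub {R n} k a.
Arguments Lop {R n} a.

Ltac natr_neq0 :=
  rewrite -[1 : rat]/(1%:R) -?natrM -?natrD -?natrX ?pnatr_eq0 -?lt0n
          ?fact_gt0 ?expn_gt0 /=; lia.

Definition recip_coef (k : nat) : rat := nth 0 (recip_seq k) k.

Lemma size_recip_seq m : size (recip_seq m) = m.+1.
Proof. by elim: m => //= m IHm; rewrite size_rcons IHm. Qed.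

Lemma nth_recip_seq m k : (k <= m)%N -> nth 0 (recip_seq m) k = recip_coef k.
Proof.
elim: m => [|m IHm] le_km; first by case: k le_km.
have [le_k_m|lt_mk] := leqP k m.
  by rewrite /= nth_rcons size_recip_seq ltnS le_k_m IHm.
by have -> : k = m.+1 by lia.
Qed.

Lemma C2E k : C2 k = (k.*2)`!%:R * recip_coef k.
Proof. by []. Qed.

Lemma asinh_coef0 : asinh_coef 0 = 1.
Proof. by rewrite /asinh_coef expr0 mul1r. Qed.

Lemma recip_coefS m :
  recip_coef m.+1 = - \sum_(k < m.+1) asinh_coef k.+1 * recip_coef (m - k).
Proof.
rewrite /recip_coef /= nth_rcons size_recip_seq ltnn eqxx big_add1 big_mkord.
by congr (- _); apply: eq_bigr => k _; rewrite nth_recip_seq ?subSS ?leq_subr.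
Qed.

Lemma recip_coef_conv i :
  \sum_(j < i.+1) recip_coef (i - j) * asinh_coef j = (i == 0%N)%:R.
Proof.
rewrite big_ord_recl subn0 asinh_coef0 mulr1; case: i => [|m].
  by rewrite big_ord0 addr0.
rewrite recip_coefS [X in _ + X](eq_bigr (fun k : 'I_m.+1 =>
  asinh_coef k.+1 * recip_coef (m - k))) ?addNr // => k _.
by rewrite mulrC /bump /= subSS.
Qed.

(* Coefficients of (1 + X)^(-1/2) = (arcsinh t)' and of -(1 + X)^(1/2). *)
Definition rsqrt_coef (k : nat) : rat := asinh_coef k * (k.*2.+1)%:R.

Definition msqrt_coef (m : nat) : rat :=
  (-1) ^+ m * oddfact (m%:Z - 1) / ((2 ^ m)%:R * m`!%:R).

Lemma rsqrt_coef0 : rsqrt_coef 0 = 1.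
Proof. by rewrite /rsqrt_coef asinh_coef0 mul1r. Qed.

Lemma rsqrt_coefS k : rsqrt_coef k.+1 * (k.+1.*2)%:R = - (rsqrt_coef k * (k.*2.+1)%:R).
Proof.
rewrite /rsqrt_coef /asinh_coef doubleS !factS !expnS exprS expnMn !natrM !natrX -!muln2.
by field; natr_neq0.
Qed.

Lemma oddfact_natS j : oddfact_nat j.+1 = (oddfact_nat j * j.*2.+1)%N.
Proof. by rewrite /oddfact_nat big_nat_recr. Qed.

Lemma oddfact_pred k : oddfact (k.+1%:Z - 1) = (oddfact_nat k)%:R.
Proof. by rewrite -addn1 PoszD addrK. Qed.

Lemma oddfact_m1 : oddfact (-1) = -1.
Proof. by rewrite /oddfact /= /oddfact_nat big_nat1 expr1 divr1. Qed.

Lemma msqrt_coef0 : msqrt_coef 0 = -1.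
Proof.
by rewrite /msqrt_coef sub0r oddfact_m1 expr0 mul1r expn0 fact0 mulr1n mulr1 divr1.
Qed.

Lemma msqrt_coefS k : msqrt_coef k.+1 * (k.+1.*2)%:R = msqrt_coef k * (1 - (k.*2)%:R).
Proof.
rewrite /msqrt_coef oddfact_pred; case: k => [|k].
  by rewrite sub0r oddfact_m1 /oddfact_nat big_geq //=; field.
rewrite oddfact_pred oddfact_natS doubleS !factS !expnS exprS !natrM -!muln2.
by field; natr_neq0.
Qed.

Lemma coef_prod_poly (R : comNzRingType) k n (f : 'I_k -> nat -> R) :
  (\prod_(r < k) \poly_(i < n.+1) f r i)`_n =
  \sum_(i : {ffun 'I_k -> 'I_n.+1} | (\sum_(r < k) (i r : nat))%N == n)
    \prod_(r < k) f r (i r).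
Proof.
rewrite (eq_bigr _ (fun r _ => poly_def _ _)) bigA_distr_bigA coef_sum /=.
rewrite [RHS]big_mkcond; apply: eq_bigr => i _.
rewrite (eq_bigr _ (fun r _ => esym (mul_polyC _ _))) big_split /= -rmorph_prod.
by rewrite prodrXr mul_polyC coefZ coefXn eq_sym; case: eqP; rewrite ?mulr1 ?mulr0.
Qed.

Lemma convC_coef k (j : 'I_k -> nat) n :
  convC j n = (n.*2)`!%:R *
    (\prod_(r < k) \poly_(i < n.+1) (C2 (i + j r) / ((i.*2)`!)%:R))`_n.
Proof.
rewrite coef_prod_poly big_distrr; apply: eq_bigr => i _.
by rewrite prodf_div -natr_prod /= mulrAC mulrA.
Qed.

Section ArcsinhSeries.
Variable n : nat.

Local Notation Q := {poly %/ Xn1 rat n}.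
Local Notation x := (in_qpoly (Xn1 rat n) 'X).
Local Notation g := (@series rat n recip_coef).
Local Notation u := (@series rat n asinh_coef).
Local Notation w := (@series rat n rsqrt_coef).
Local Notation s := (@series rat n msqrt_coef).

Lemma coefq_1pX0 : (1 + x : Q)`_0 = 1.
Proof. by rewrite coefqD coefq1 // coef_trunc // coefX addr0. Qed.

Lemma recip_mul_asinh : g * u = 1.
Proof.
apply: qpoly_coefP => i le_in; rewrite coefqMr // coefq1 // -recip_coef_conv.
apply: eq_bigr => j _; have := ltn_ord j; rewrite ltnS => le_ji.
by rewrite !coef_series ?(leq_trans le_ji) //; lia.
Qed.

Lemma Theta_asinh : Theta u = w - u.
Proof.
apply: qpoly_coefP => i le_in.
by rewrite coef_Theta // coefqD coefqN !coef_series // /rsqrt_coef -natr1; ring.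
Qed.

Lemma rsqrt_ode : (1 + x) * Theta w = - (x * w).
Proof.
apply: qpoly_coefP => i le_in.
rewrite mulrDl mul1r coefqD coefqN !coefqXM //.
case: i le_in => [|i] le_in; rewrite !coef_Theta ?coef_series ?(ltnW le_in) //=.
by rewrite rsqrt_coefS -natr1; ring.
Qed.

Lemma msqrt_ode : (1 + x) * Theta s = x * s.
Proof.
apply: qpoly_coefP => i le_in.
rewrite mulrDl mul1r coefqD !coefqXM //.
case: i le_in => [|i] le_in; rewrite !coef_Theta ?coef_series ?(ltnW le_in) //=.
  by rewrite mulr0 addr0.
by rewrite msqrt_coefS; ring.
Qed.

Lemma rsqrt_sqr_1pX : w ^+ 2 * (1 + x) = 1.
Proof.
apply/eqP; rewrite -subr_eq0; apply/eqP/Theta_ode_eq0; last first.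
  by rewrite coefqD coefqN !coefqM0 coefq_1pX0 coefq1 // coef_series // rsqrt_coef0; ring.
rewrite ThetaD ThetaN Theta1 !ThetaM ThetaD Theta1 ThetaX.
transitivity ((w * (1 + x)) * ((1 + x) * Theta w) *+ 2 + (x * w ^+ 2 * (1 + x)) *+ 2).
  ring.
by rewrite rsqrt_ode; ring.
Qed.

Lemma msqrt_mul_rsqrt : s * w = -1.
Proof.
apply/eqP; rewrite -addr_eq0; apply/eqP/Theta_ode_eq0; last first.
  by rewrite coefqD coefqM0 coefq1 // !coef_series // msqrt_coef0 rsqrt_coef0 mulr1 addNr.
rewrite ThetaD Theta1 ThetaM addr0.
transitivity (w * ((1 + x) * Theta s) + s * ((1 + x) * Theta w)); first ring.
by rewrite msqrt_ode rsqrt_ode; ring.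
Qed.

Lemma Theta_rsqrt : Theta w = w ^+ 3 - w.
Proof.
have xw2 : x * w ^+ 2 = 1 - w ^+ 2.
  by rewrite -rsqrt_sqr_1pX; ring.
transitivity (w ^+ 2 * (1 + x) * Theta w); first by rewrite rsqrt_sqr_1pX mul1r.
transitivity (w ^+ 2 * ((1 + x) * Theta w)); first ring.
by rewrite rsqrt_ode; transitivity (- (x * w ^+ 2) * w); [ring | rewrite xw2; ring].
Qed.

Lemma Theta_recip : Theta g = g - g ^+ 2 * w.
Proof.
have h0 : Theta g * u + g * (w - u) = 0.
  by rewrite -Theta_asinh -ThetaM recip_mul_asinh Theta1.
transitivity (Theta g * (g * u)); first by rewrite recip_mul_asinh mulr1.
transitivity (g * (Theta g * u + g * (w - u)) - g ^+ 2 * w + g * (g * u)); first ring.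
by rewrite h0 recip_mul_asinh; ring.
Qed.

Lemma msqrt_mul_Lop : s * Lop g = g ^+ 4 *+ 6.
Proof.
have sw := msqrt_mul_rsqrt.
have xw2 : x * w ^+ 2 = 1 - w ^+ 2 by rewrite -rsqrt_sqr_1pX; ring.
have w2L : w ^+ 2 * Lop g = - (g ^+ 4 * w ^+ 3) *+ 6.
  rewrite /Lop mulrDr mulrA [w ^+ 2 * x]mulrC xw2 /Theta_sub.
  by rewrite !(ThetaD, ThetaN, ThetaMn, ThetaM, Theta_recip, Theta_rsqrt); ring.
transitivity ((s * w) ^+ 2 * (s * Lop g)); first by rewrite sw; ring.
transitivity (s ^+ 3 * (w ^+ 2 * Lop g)); first ring.
by rewrite w2L; transitivity (- (s * w) ^+ 3 * g ^+ 4 *+ 6); [ring | rewrite sw; ring].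
Qed.

Lemma convC0_recip k : convC (fun _ : 'I_k => 0%N) n = (n.*2)`!%:R * (g ^+ k)`_n.
Proof.
rewrite convC_coef prodr_const card_ord /series -rmorphXn coef_trunc //.
rewrite (@eq_poly _ _ _ recip_coef) // => i _.
by rewrite addn0 C2E mulrC mulKf // pnatr_eq0 -lt0n fact_gt0.
Qed.

Lemma coef_recip_exp4 : (g ^+ 4)`_n *+ 6 =
  \sum_(j < n.+1) msqrt_coef (n - j) *
    (recip_coef j * ((2 * j%:R - 1) * (2 * j%:R - 2) * (2 * j%:R - 3))
     + (if (j : nat) == 0%N then 0 else recip_coef j.-1 * (2 * j%:R - 3) ^+ 3)).
Proof.
rewrite -coefqMn -msqrt_mul_Lop coefqMr //; apply: eq_bigr => j _.
have le_jn := leq_ord j; have le_j1n := leq_trans (leq_pred j) le_jn.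
by rewrite coef_Lop // !coef_series ?leq_subr.
Qed.

End ArcsinhSeries.

Lemma msqrt_coef_subn n l : (l <= n)%N ->
  msqrt_coef (n - l) =
    (-1) ^+ (n - l) * oddfact (n%:Z - l%:Z - 1) / ((2 ^ (n - l))%:R * (n - l)`!%:R).
Proof. by move=> le_ln; rewrite /msqrt_coef subzn. Qed.

Theorem theorem6 (n : nat) : (1 <= n)%N ->
  convC (fun _ : 'I_4 => 0%N) n =
    (n.*2)`!%:R / 6 *
      \sum_(0 <= l < n.+1)
        ((-1) ^+ (n - l) * oddfact (n%:Z - l%:Z - 1) *
           ((2 * l%:R - 1) * (2 * l%:R - 2) * (2 * l%:R - 3)) /
           ((2 ^ (n - l))%:R * (n - l)`!%:R * (l.*2)`!%:R) * C2 l)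
  + (n.*2)`!%:R / 6 *
      \sum_(1 <= l < n.+1)
        ((-1) ^+ (n - l) * oddfact (n%:Z - l%:Z - 1) *
           ((2 * l%:R) * (2 * l%:R - 1) * (2 * l%:R - 3) ^+ 3) /
           ((2 ^ (n - l))%:R * (n - l)`!%:R * (l.*2)`!%:R) * C2 l.-1).
Proof.
(* The identity holds for n = 0 as well. *)
move=> _; rewrite convC0_recip -mulrDr.
set S1 := \sum_(0 <= l < n.+1) _; set S2 := \sum_(1 <= l < n.+1) _.
suff -> : S1 + S2 = (series n recip_coef ^+ 4)`_n *+ 6 by rewrite -mulr_natr; field.
rewrite coef_recip_exp4 (eq_bigr _ (fun j _ => mulrDr _ _ _)) big_split /=.
congr (_ + _).
  rewrite /S1 big_mkord; apply: eq_bigr => l _.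
  by rewrite msqrt_coef_subn ?leq_ord // C2E; field; natr_neq0.
rewrite big_ord_recl /= mulr0 add0r /S2 big_add1 big_mkord /=.
apply: eq_bigr => l _; rewrite msqrt_coef_subn /bump ?add1n ?leq_ord //= C2E.
by rewrite doubleS !factS -!muln2 !natrM -natr1; field; natr_neq0.
Qed.
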